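(* Let $G=(V,E)$ be a simple, undirected, unweighted, connected, locally finite graph. Then for every edge $i\sim j$, $$\kappa(i,j)\ \ge\ \mathrm{Ric}(i,j).$$
   Context: $d_v$ is the degree of $v$, $S_1(v)$ its set of neighbours, $d_G$ the shortest-path distance. For an edge $i\sim j$: $\sharp_\Delta(i,j)=S_1(i)\cap S_1(j)$; $\sharp_\square^i(i,j)=\{k\in S_1(i)\setminus (S_1(j)\cup\{j\}) : \exists\, w\in (S_1(k)\cap S_1(j))\setminus (S_1(i)\cup\{i\})\}$ and $\sharp_\square^j(i,j)$ symmetrically; $\gamma_{\max}(i,j)=\max\big\{\max_{k\in\sharp_\square^i}|(S_1(k)\cap S_1(j))\setminus(S_1(i)\cup\{i\})|,\ \max_{w\in\sharp_\square^j}|(S_1(w)\cap S_1(i))\setminus(S_1(j)\cup\{j\})|\big\}$. Balanced Forman curvature: $\mathrm{Ric}(i,j)=0$ if $\min\{d_i,d_j\}=1$; otherwise $$\mathrm{Ric}(i,j)=\frac{2}{d_i}+\frac{2}{d_j}-2+\frac{2|\sharp_\Delta|}{\max\{d_i,d_j\}}+\frac{|\sharp_\Delta|}{\min\{d_i,d_j\}}+\frac{\gamma_{\max}^{-1}}{\max\{d_i,d_j\}}\big(|\sharp_\square^i|+|\sharp_\square^j|\big),$$ where the last term is $0$ if $\sharp_\square^i=\emptyset$. Ollivier curvature: for $\alpha\in[0,1)$ let $\mu_v^\alpha$ be the probability measure with mass $\alpha$ at $v$, $(1-\alpha)/d_v$ at each neighbour of $v$, and $0$ elsewhere; $W_1$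 is the $L^1$-Wasserstein (transportation) distance with respect to $d_G$; $\kappa(i,j)=\lim_{\alpha\to1}\frac{1-W_1(\mu_i^\alpha,\mu_j^\alpha)}{1-\alpha}$. *)

(* A simple, undirected, locally finite graph on a vertex type V : eqType is given
   by its neighbour lists  nb : V -> seq V  (S_1(v) = nb v, d_v = size (nb v)). *)
From HB Require Import structures.
From mathcomp Require Import all_boot all_order all_algebra.
From mathcomp Require Import all_classical all_reals all_analysis.
Set Implicit Arguments. Unset Strict Implicit. Unset Printing Implicit Defensive.
Import Order.TTheory GRing.Theory Num.Theory.
Local Open Scope classical_set_scope.
Local Open Scope ring_scope.

Definition simple_graph (V : eqType) (nb : V -> seq V) : Prop :=
  (forall v, uniq (nb v)) /\
  (forall v, v \notin nb v) /\
  (forall v w, (w \in nb v) = (v \in nb w)).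

Definition adj (V : eqType) (nb : V -> seq V) (x y : V) : bool := y \in nb x.

Fixpoint walk (V : eqType) (nb : V -> seq V) (n : nat) (x y : V) : Prop :=
  match n with
  | 0 => x = y
  | n'.+1 => exists z, adj nb x z /\ walk nb n' z y
  end.

Definition connected_graph (V : eqType) (nb : V -> seq V) : Prop :=
  forall x y, exists n, walk nb n x y.

Definition dist (R : realType) (V : eqType) (nb : V -> seq V) (x y : V) : R :=
  inf [set (n%:R : R) | n in [set n : nat | walk nb n x y]].

Definition deg (V : eqType) (nb : V -> seq V) (v : V) : nat := size (nb v).

Definition sharp_tri (V : eqType) (nb : V -> seq V) (i j : V) : seq V :=
  [seq k <- nb i | k \in nb j].

Definition sq_witnesses (V : eqType) (nb : V -> seq V) (i j k : V) : seq V :=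
  [seq w <- nb k | (w \in nb j) && (w \notin nb i) && (w != i)].

Definition sharp_sq (V : eqType) (nb : V -> seq V) (i j : V) : seq V :=
  [seq k <- nb i | (k \notin nb j) && (k != j) && (sq_witnesses nb i j k != [::])].

Definition gamma_max (V : eqType) (nb : V -> seq V) (i j : V) : nat :=
  maxn (\max_(k <- sharp_sq nb i j) size (sq_witnesses nb i j k))
       (\max_(w <- sharp_sq nb j i) size (sq_witnesses nb j i w)).

Definition Ric (R : realType) (V : eqType) (nb : V -> seq V) (i j : V) : R :=
  let di : R := (deg nb i)%:R in
  let dj : R := (deg nb j)%:R in
  let dmax : R := (maxn (deg nb i) (deg nb j))%:R in
  let dmin : R := (minn (deg nb i) (deg nb j))%:R in
  let t : R := (size (sharp_tri nb i j))%:R in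
  if minn (deg nb i) (deg nb j) == 1%N then 0 else
    2 / di + 2 / dj - 2 + 2 * t / dmax + t / dmin +
    (if sharp_sq nb i j == [::] then 0
     else ((gamma_max nb i j)%:R)^-1 / dmax *
          ((size (sharp_sq nb i j))%:R + (size (sharp_sq nb j i))%:R)).

Definition mu (R : realType) (V : eqType) (nb : V -> seq V) (alpha : R) (v x : V) : R :=
  (if x == v then alpha else 0) +
  (if x \in nb v then (1 - alpha) / (deg nb v)%:R else 0).

Definition supp2 (V : eqType) (nb : V -> seq V) (i j : V) : seq V :=
  undup (i :: j :: nb i ++ nb j).

(* couplings (transport plans) between mu_i^alpha and mu_j^alpha; since both
   measures are supported in supp2 i j, every coupling is supported in
   supp2 i j x supp2 i j *)
Definition coupling (R : realType) (V : eqType) (nb : V -> seq V) (alpha : R)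
    (i j : V) (p : V -> V -> R) : Prop :=
  let S := supp2 nb i j in
  (forall x y, 0 <= p x y) /\
  (forall x y, (x \notin S) || (y \notin S) -> p x y = 0) /\
  (forall x, x \in S -> \sum_(y <- S) p x y = mu nb alpha i x) /\
  (forall y, y \in S -> \sum_(x <- S) p x y = mu nb alpha j y).

Definition W1 (R : realType) (V : eqType) (nb : V -> seq V) (alpha : R) (i j : V) : R :=
  inf [set \sum_(x <- supp2 nb i j) \sum_(y <- supp2 nb i j) p x y * dist R nb x y
      | p in [set p : V -> V -> R | coupling nb alpha i j p]].

(* Let s(a) = (1 - W1(mu_i^a, mu_j^a)) / (1 - a).  Mixing a coupling at a with the
   coupling of mu_i^1 = δ_i and mu_j^1 = δ_j shows W1 at t a + (1 - t) is at most
   t W1(a) + (1 - t), i.e. s is nondecreasing, and the 1-Lipschitz potential 1_{i}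
   bounds s by 1 + 1/d_j.  So κ = lim_{a -> 1} s(a) exists and κ >= s(1/2).

   It then suffices to transport mu_i^(1/2) to mu_j^(1/2) at cost at most 1 - Ric/2.
   Keep in place all the mass that can stay (at i, j and the common neighbours), send
   1/(max(d_i, d_j) γ_max) along each edge from ♯□^i to ♯□^j, and spread what remains by
   a product plan: its moves have length at most 2, or 3 between the two ♯□ sides,
   and the masses involved are exactly the quantities entering Ric. *)

From HB Require Import structures.
From mathcomp Require Import all_boot all_order all_algebra.
From mathcomp Require Import all_classical all_reals all_analysis.
From mathcomp Require Import ring lra.
Set Implicit Arguments. Unset Strict Implicit. Unset Printing Implicit Defensive.
Import Order.TTheory GRing.Theory Num.Theory.
Import numFieldNormedType.Exports.
Local Open Scope classical_set_scope.
Local Open Scope ring_scope.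

Section SeqSums.
Variables (R : numFieldType) (T : eqType).
Implicit Types (s : seq T) (F G : T -> R).

Lemma sum_indicator_seq s v F :
  uniq s -> v \in s -> \sum_(y <- s) (y == v)%:R * F y = F v.
Proof.
move=> us vs; rewrite (bigD1_seq v) //= eqxx mul1r big1 ?addr0 //.
by move=> y /negbTE ->; rewrite mul0r.
Qed.

Lemma sum_indicator1_seq s v : uniq s -> v \in s -> \sum_(y <- s) (y == v)%:R = 1 :> R.
Proof.
move=> us vs; rewrite -[RHS](sum_indicator_seq (fun _ => 1) us vs).
by apply: eq_bigr => y _; rewrite mulr1.
Qed.

Lemma sum_nat_count s (P : pred T) : \sum_(y <- s) (P y)%:R = (count P s)%:R :> R.
Proof. by rewrite -sum1_count natr_sum [RHS]big_mkcond; apply: eq_bigr => y _; case: (P y). Qed.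

Lemma count_uniq_eq s1 s2 (P Q : pred T) : uniq s1 -> uniq s2 ->
  (forall y, (y \in s1) && P y = (y \in s2) && Q y) -> count P s1 = count Q s2.
Proof.
move=> u1 u2 h; rewrite -!size_filter; apply: perm_size.
apply: uniq_perm; rewrite ?filter_uniq // => y.
by rewrite !mem_filter andbC h andbC.
Qed.

Lemma psumr_seq_eq0 s F x : x \in s -> (forall y, y \in s -> 0 <= F y) ->
  \sum_(y <- s) F y = 0 -> F x = 0.
Proof.
move=> xs F0 /eqP; rewrite big_seq psumr_eq0 // => hs.
by have /implyP/(_ xs)/eqP := allP hs x xs.
Qed.

(* Also valid when the total mass is 0, since [F] then vanishes on [s]. *)
Lemma sum_product_plan_r s F G x : x \in s ->
  (forall y, y \in s -> 0 <= F y) -> \sum_(y <- s) G y = \sum_(y <- s) F y ->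
  \sum_(y <- s) F x * G y / \sum_(z <- s) F z = F x.
Proof.
move=> xs F0 eFG; rewrite -mulr_suml -mulr_sumr eFG.
have [Z0|Zn] := eqVneq (\sum_(z <- s) F z) 0; last by rewrite mulfK.
by rewrite (psumr_seq_eq0 xs F0 Z0) !mul0r.
Qed.

Lemma sum_product_plan_l s F G y : y \in s ->
  (forall x, x \in s -> 0 <= G x) -> \sum_(x <- s) G x = \sum_(x <- s) F x ->
  \sum_(x <- s) F x * G y / \sum_(z <- s) F z = G y.
Proof.
move=> ys G0 eGF; rewrite -!mulr_suml -eGF.
have [Z0|Zn] := eqVneq (\sum_(z <- s) G z) 0; last by rewrite mulrC mulKf.
by rewrite (psumr_seq_eq0 ys G0 Z0) mulr0 mul0r.
Qed.

Lemma sum_outer_mulr s F G c :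
  \sum_(x <- s) \sum_(y <- s) F x * G y * c = (\sum_(x <- s) F x) * (\sum_(y <- s) G y) * c.
Proof.
rewrite -mulrA mulr_suml; apply: eq_bigr => x _.
by rewrite mulr_suml mulr_sumr; apply: eq_bigr => y _; rewrite mulrA.
Qed.
End SeqSums.

Lemma ler_mul_divl (R : numFieldType) (a b z : R) : 0 <= a -> 0 <= b -> b <= z ->
  a * b / z <= a.
Proof.
move=> a0 b0 bz; have [->|zn] := eqVneq z 0; first by rewrite invr0 mulr0.
have z0 : 0 < z by rewrite lt_def zn (le_trans b0 bz).
by rewrite -mulrA ler_piMr // ler_pdivrMr // mul1r.
Qed.

Lemma nondecreasing_cvg_at_left_ge (R : realType) (f : R -> R) (a b M : R) :
  a < b -> {in `[a, b[ &, {homo f : x y / x <= y}} ->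
  (forall x, x \in `[a, b[ -> f x <= M) ->
  exists l, f x @[x --> b^'-] --> l /\ f a <= l.
Proof.
move=> ab f_mono f_ub.
have cv : cvg (f x @[x --> b^'-]).
  apply: nondecreasing_at_left_is_cvgr.
    near=> c => x y; rewrite !in_itv /= => /andP[cx xb] /andP[cy yb] xy.
    have ac : a < c by near: c; exact: nbhs_left_gt.
    by apply: f_mono => //; rewrite in_itv /= ?xb ?yb andbT ltW // (lt_trans ac).
  near=> c; exists M => _ [y /= + <-]; rewrite in_itv /= => /andP[cy yb].
  have ac : a < c by near: c; exact: nbhs_left_gt.
  by apply: f_ub; rewrite in_itv /= yb andbT ltW // (lt_trans ac).
exists (lim (f x @[x --> b^'-])); split => //; apply: limr_ge => //.
near=> x; have ax : a < x by near: x; exact: nbhs_left_gt.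
have xb : x < b by near: x; exact: nbhs_left_lt.
by apply: f_mono; rewrite ?in_itv /= ?lexx ?ab ?xb ?(ltW ax).
Unshelve. all: by end_near.
Qed.

(** * Graph distance *)

Section Distance.
Variables (R : realType) (V : eqType) (nb : V -> seq V).

Definition walk_le (k : nat) (x y : V) : Prop := exists2 n, (n <= k)%N & walk nb n x y.

Lemma walk_cat m n x z y : walk nb m x z -> walk nb n z y -> walk nb (m + n) x y.
Proof.
elim: m x => [|m IH] x /=; first by move=> ->.
by move=> [w [xw wz]] zy; exists w; split => //; exact: IH zy.
Qed.

Lemma walk_le_cat m n x z y : walk_le m x z -> walk_le n z y -> walk_le (m + n) x y.
Proof.
move=> [m' mm' xz] [n' nn' zy]; exists (m' + n')%N; first exact: leq_add.
exact: walk_cat xz zy.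
Qed.

Lemma walk_le1 x y : (x == y) || adj nb x y -> walk_le 1 x y.
Proof. by case/orP => [/eqP ->|xy]; [exists 0%N | exists 1%N => //; exists y]. Qed.

Lemma dist_le_walk_le k x y : walk_le k x y -> dist R nb x y <= k%:R.
Proof.
move=> [n nk xy]; apply: le_trans (_ : n%:R <= _); last by rewrite ler_nat.
apply: ge_inf; last by exists n.
by exists 0 => _ [m _ <-]; exact: ler0n.
Qed.

Lemma dist_refl x : dist R nb x x = 0.
Proof.
apply/eqP; rewrite eq_le (@dist_le_walk_le 0); last by exists 0%N.
apply: lb_le_inf; first by exists 0; exists 0%N.
by move=> _ [m _ <-]; exact: ler0n.
Qed.

Hypothesis nb_connected : connected_graph nb.

Lemma dist_ge0 x y : 0 <= dist R nb x y.
Proof.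
have [n xy] := nb_connected x y.
apply: lb_le_inf; first by exists n%:R; exists n.
by move=> _ [m _ <-]; exact: ler0n.
Qed.

Lemma dist_ge1 x y : x != y -> 1 <= dist R nb x y.
Proof.
move=> xy; have [n wxy] := nb_connected x y.
apply: lb_le_inf; first by exists n%:R; exists n.
move=> _ [[|m] /= wm <-]; first by rewrite wm eqxx in xy.
by rewrite ler1n.
Qed.

End Distance.

Section Edge.
Variables (R : realType) (V : eqType) (nb : V -> seq V).
Hypothesis nb_simple : simple_graph nb.
Hypothesis nb_connected : connected_graph nb.
Variables i j : V.
Hypothesis ij_adj : adj nb i j.

Local Notation S := (supp2 nb i j).
Implicit Types (a b t : R) (p : V -> V -> R).

Lemma nb_uniq v : uniq (nb v). Proof. by case: nb_simple. Qed.
Lemma nb_irr v : v \notin nb v. Proof. by case: nb_simple => _ []. Qed.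
Lemma nb_sym v w : (w \in nb v) = (v \in nb w). Proof. by case: nb_simple => _ []. Qed.

Lemma ij_neq : i != j.
Proof. by apply: contraTneq ij_adj => ->; rewrite /adj (negbTE (nb_irr j)). Qed.
Lemma j_in_nb_i : j \in nb i. Proof. exact: ij_adj. Qed.
Lemma i_in_nb_j : i \in nb j. Proof. by rewrite -nb_sym. Qed.

Lemma supp2_uniq : uniq S. Proof. exact: undup_uniq. Qed.
Lemma supp2_i : i \in S. Proof. by rewrite mem_undup inE eqxx. Qed.
Lemma supp2_j : j \in S. Proof. by rewrite mem_undup !inE eqxx orbT. Qed.
Lemma supp2_nb_i x : x \in nb i -> x \in S.
Proof. by move=> xi; rewrite mem_undup !inE mem_cat xi !orbT. Qed.
Lemma supp2_nb_j x : x \in nb j -> x \in S.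
Proof. by move=> xj; rewrite mem_undup !inE mem_cat xj !orbT. Qed.

(** * Transport costs and the Ollivier slope *)

Definition cost (p : V -> V -> R) : R :=
  \sum_(x <- S) \sum_(y <- S) p x y * dist R nb x y.

Lemma cost_ge0 p : (forall x y, 0 <= p x y) -> 0 <= cost p.
Proof.
move=> p0; apply: sumr_ge0 => x _; apply: sumr_ge0 => y _.
by rewrite mulr_ge0 ?dist_ge0.
Qed.

Lemma cost_lincomb (s t : R) p q :
  cost (fun x y => s * p x y + t * q x y) = s * cost p + t * cost q.
Proof.
rewrite /cost !mulr_sumr -big_split; apply: eq_bigr => x _ /=.
by rewrite !mulr_sumr -big_split; apply: eq_bigr => y _ /=; ring.
Qed.

Lemma W1_le_cost a p : coupling nb a i j p -> W1 nb a i j <= cost p.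
Proof.
move=> pa; apply: ge_inf; last by exists p.
by exists 0 => _ [q [q0 _] <-]; exact: cost_ge0.
Qed.

Lemma W1_ge a l : (exists p, coupling nb a i j p) ->
  (forall p, coupling nb a i j p -> l <= cost p) -> l <= W1 nb a i j.
Proof.
move=> [p pa] lp; apply: lb_le_inf; first by exists (cost p); exists p.
by move=> _ [q qa <-]; exact: lp.
Qed.

(* The coupling of [mu_i^1] and [mu_j^1]. *)
Definition dirac_plan (x y : V) : R := (x == i)%:R * (y == j)%:R.

Lemma cost_dirac_plan : cost dirac_plan <= 1.
Proof.
have -> : cost dirac_plan = dist R nb i j.
  rewrite /cost /dirac_plan (eq_bigr (fun x => (x == i)%:R *
      \sum_(y <- S) (y == j)%:R * dist R nb x y)); last first.
    by move=> x _; rewrite mulr_sumr; apply: eq_bigr => y _; rewrite mulrA.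
  by rewrite !sum_indicator_seq ?supp2_uniq ?supp2_i ?supp2_j.
by apply: (@dist_le_walk_le _ _ _ 1); apply: walk_le1; rewrite ij_adj orbT.
Qed.

Lemma mu_mix (t a : R) v x :
  mu nb (t * a + (1 - t)) v x = t * mu nb a v x + (1 - t) * (x == v)%:R.
Proof. by rewrite /mu; case: (x == v); case: (x \in nb v); rewrite /=; ring. Qed.

Lemma coupling_mix (t a : R) p : 0 <= t -> t <= 1 -> coupling nb a i j p ->
  coupling nb (t * a + (1 - t)) i j (fun x y => t * p x y + (1 - t) * dirac_plan x y).
Proof.
move=> t0 t1 [p0 [pS [prow pcol]]]; have t1' : 0 <= 1 - t by rewrite subr_ge0.
split; [|split; [|split]].
- by move=> x y; rewrite addr_ge0 ?mulr_ge0.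
- move=> x y xyS; rewrite pS // /dirac_plan.
  case/orP: xyS => [xS|yS].
    have /negbTE-> : x != i by apply: contraNneq xS => ->; exact: supp2_i.
    by rewrite !mul0r !mulr0 addr0.
  have /negbTE-> : y != j by apply: contraNneq yS => ->; exact: supp2_j.
  by rewrite !mulr0 addr0.
- move=> x xS; rewrite big_split /= -!mulr_sumr prow // mu_mix.
  by rewrite sum_indicator1_seq ?supp2_uniq ?supp2_j ?mulr1.
- move=> y yS; rewrite big_split /= -!mulr_sumr pcol // mu_mix.
  by rewrite /dirac_plan -mulr_suml sum_indicator1_seq ?supp2_uniq ?supp2_i ?mul1r.
Qed.

Lemma W1_mix_le (t a : R) : 0 < t -> t <= 1 -> (exists p, coupling nb a i j p) ->
  W1 nb (t * a + (1 - t)) i j <= t * W1 nb a i j + (1 - t).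
Proof.
move=> t0 t1 pa.
suff : (W1 nb (t * a + (1 - t)) i j - (1 - t)) / t <= W1 nb a i j.
  by rewrite ler_pdivrMr // => ?; lra.
apply: W1_ge => // p ap; rewrite ler_pdivrMr //.
have := W1_le_cost (coupling_mix (ltW t0) t1 ap); rewrite cost_lincomb.
have : (1 - t) * cost dirac_plan <= 1 - t.
  by rewrite ler_piMr ?subr_ge0 ?cost_dirac_plan.
lra.
Qed.

Lemma cost_ge_potential a p (f : V -> R) : coupling nb a i j p ->
  (forall x y, f x - f y <= dist R nb x y) ->
  \sum_(x <- S) f x * mu nb a i x - \sum_(y <- S) f y * mu nb a j y <= cost p.
Proof.
move=> [p0 [_ [prow pcol]]] f_lip.
have -> : \sum_(x <- S) f x * mu nb a i x - \sum_(y <- S) f y * mu nb a j y =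
    \sum_(x <- S) \sum_(y <- S) p x y * (f x - f y).
  rewrite (eq_big_seq (fun x => \sum_(y <- S) f x * p x y)); last first.
    by move=> x xS; rewrite -prow // mulr_sumr.
  rewrite [X in _ - X](eq_big_seq (fun y => \sum_(x <- S) f y * p x y)); last first.
    by move=> y yS; rewrite -pcol // mulr_sumr.
  rewrite [X in _ - X]exchange_big -sumrB; apply: eq_bigr => x _.
  by rewrite -sumrB; apply: eq_bigr => y _; ring.
by apply: ler_sum => x _; apply: ler_sum => y _; rewrite ler_wpM2l.
Qed.

Lemma W1_ge_mass_i a : (exists p, coupling nb a i j p) ->
  a - (1 - a) / (deg nb j)%:R <= W1 nb a i j.
Proof.
move=> pa; apply: W1_ge => // p ap.
have f_lip : forall x y, (x == i)%:R - (y == i)%:R <= dist R nb x y.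
  move=> x y; have [<-|xy] := eqVneq x y; first by rewrite subrr dist_refl.
  by apply: le_trans (dist_ge1 R nb_connected xy); case: (x == i); case: (y == i) => /=; lra.
apply: le_trans (cost_ge_potential ap f_lip).
rewrite !sum_indicator_seq ?supp2_uniq ?supp2_i // /mu eqxx (negbTE (nb_irr i)).
by rewrite (negbTE ij_neq) i_in_nb_j addr0 add0r.
Qed.

Definition ollivier_slope (a : R) : R := (1 - W1 nb a i j) / (1 - a).

Lemma ollivier_slope_monotone a b : a <= b -> b < 1 ->
  (exists p, coupling nb a i j p) -> ollivier_slope a <= ollivier_slope b.
Proof.
move=> ab b1 pa; have a1 : a < 1 by apply: le_lt_trans b1.
have a1' : 0 < 1 - a by rewrite subr_gt0.
have b1' : 0 < 1 - b by rewrite subr_gt0.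
pose t := (1 - b) / (1 - a).
have t0 : 0 < t by rewrite divr_gt0.
have t1 : t <= 1 by rewrite ler_pdivrMr // mul1r lerD2l lerN2.
have tb : t * a + (1 - t) = b by rewrite /t; field; rewrite lt0r_neq0.
have := W1_mix_le t0 t1 pa; rewrite tb => Wb.
have -> : ollivier_slope a = t * (1 - W1 nb a i j) / (1 - b).
  by rewrite /ollivier_slope /t; field; rewrite !lt0r_neq0.
by rewrite /ollivier_slope ler_pM2r ?invr_gt0 //; lra.
Qed.

Lemma ollivier_slope_ub a : a < 1 -> (exists p, coupling nb a i j p) ->
  ollivier_slope a <= 1 + 1 / (deg nb j)%:R.
Proof.
move=> a1 pa; have a1' : 0 < 1 - a by rewrite subr_gt0.
have := W1_ge_mass_i pa; rewrite /ollivier_slope ler_pdivrMr //.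
have -> : (1 + 1 / (deg nb j)%:R) * (1 - a) = 1 - a + (1 - a) / (deg nb j)%:R by ring.
lra.
Qed.

Lemma coupling_exists_ge a b : a <= b -> b < 1 ->
  (exists p, coupling nb a i j p) -> exists p, coupling nb b i j p.
Proof.
move=> ab b1 [p pa]; have a1' : 0 < 1 - a by rewrite subr_gt0 (le_lt_trans ab).
pose t := (1 - b) / (1 - a).
have tb : t * a + (1 - t) = b by rewrite /t; field; rewrite lt0r_neq0.
rewrite -tb; eexists; apply: coupling_mix pa.
  by rewrite /t divr_ge0 ?(ltW a1') // subr_ge0 ltW.
by rewrite /t ler_pdivrMr // mul1r lerD2l lerN2.
Qed.

Lemma ollivier_slope_cvg_ge a : a < 1 -> (exists p, coupling nb a i j p) ->
  exists kappa, ollivier_slope x @[x --> (1 : R)^'-] --> kappa /\ ollivier_slope a <= kappa.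
Proof.
move=> a1 pa; apply: (nondecreasing_cvg_at_left_ge (M := 1 + 1 / (deg nb j)%:R) a1).
  move=> x y; rewrite !in_itv /= => /andP[ax x1] /andP[_ y1] xy.
  exact: ollivier_slope_monotone xy y1 (coupling_exists_ge ax x1 pa).
move=> x; rewrite in_itv /= => /andP[ax x1].
exact: ollivier_slope_ub x1 (coupling_exists_ge ax x1 pa).
Qed.

(** * A coupling of the lazy measures at 1/2 *)

Lemma deg_i_gt0 : (0 < deg nb i)%N.
Proof. by move: ij_adj; rewrite /adj /deg; case: (nb i). Qed.
Lemma deg_j_gt0 : (0 < deg nb j)%N.
Proof. by move: i_in_nb_j; rewrite /deg; case: (nb j). Qed.

Definition inv_di : R := (deg nb i)%:R^-1.
Definition inv_dj : R := (deg nb j)%:R^-1.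
Definition inv_dmin : R := Num.max inv_di inv_dj.
Definition inv_dmax : R := Num.min inv_di inv_dj.

Lemma inv_di_gt0 : 0 < inv_di. Proof. by rewrite invr_gt0 ltr0n deg_i_gt0. Qed.
Lemma inv_dj_gt0 : 0 < inv_dj. Proof. by rewrite invr_gt0 ltr0n deg_j_gt0. Qed.
Lemma inv_dmax_ge0 : 0 <= inv_dmax.
Proof. by rewrite le_min !ltW ?inv_di_gt0 ?inv_dj_gt0. Qed.
Lemma inv_dmax_le_i : inv_dmax <= inv_di. Proof. by rewrite ge_min lexx. Qed.
Lemma inv_dmax_le_j : inv_dmax <= inv_dj. Proof. by rewrite ge_min lexx orbT. Qed.
Lemma inv_di_le_dmin : inv_di <= inv_dmin. Proof. by rewrite le_max lexx. Qed.
Lemma inv_dj_le_dmin : inv_dj <= inv_dmin. Proof. by rewrite le_max lexx orbT. Qed.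
Lemma inv_dmin_le1 : inv_dmin <= 1.
Proof.
by rewrite ge_max !invf_le1 ?ltr0n ?ler1n ?deg_i_gt0 ?deg_j_gt0.
Qed.

Lemma mulr_inv_di : inv_di * (deg nb i)%:R = 1.
Proof. by rewrite mulVf // pnatr_eq0 -lt0n deg_i_gt0. Qed.
Lemma mulr_inv_dj : inv_dj * (deg nb j)%:R = 1.
Proof. by rewrite mulVf // pnatr_eq0 -lt0n deg_j_gt0. Qed.

Lemma inv_maxn_minn_deg :
  ((maxn (deg nb i) (deg nb j))%:R)^-1 = inv_dmax /\
  ((minn (deg nb i) (deg nb j))%:R)^-1 = inv_dmin.
Proof.
have di0 : ((deg nb i)%:R : R) \is Num.pos by rewrite posrE ltr0n deg_i_gt0.
have dj0 : ((deg nb j)%:R : R) \is Num.pos by rewrite posrE ltr0n deg_j_gt0.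
rewrite /inv_dmax /inv_dmin /inv_di /inv_dj.
case: (leqP (deg nb i) (deg nb j)) => dij.
  by rewrite min_r ?max_l // lef_pV2 // ler_nat.
by rewrite min_l ?max_r // lef_pV2 // ler_nat ltnW.
Qed.

Definition common (x : V) : bool := (x \in nb i) && (x \in nb j).
Definition only_i (x : V) : bool := (x \in nb i) && (x \notin nb j) && (x != j).
Definition only_j (y : V) : bool := (y \in nb j) && (y \notin nb i) && (y != i).

(* Twice [mu_i^(1/2)] is [(1 - inv_dmin) [x = i] + src x], and likewise for [j]. *)
Definition src (x : V) : R := inv_dmin * (x == i)%:R + inv_di * (x \in nb i)%:R.
Definition dst (y : V) : R := inv_dmin * (y == j)%:R + inv_dj * (y \in nb j)%:R.

(* Mass of [src] that is already in place for [dst]. *)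
Definition stay (x : V) : R :=
  inv_dj * (x == i)%:R + inv_di * (x == j)%:R + inv_dmax * (common x)%:R.

(* Each vertex of ♯□^i (resp. ♯□^j) has at most [gamma_max] square edges, so the
   square flow moves at most [inv_dmax] through any vertex. *)
Definition square_rate : R := inv_dmax / (gamma_max nb i j)%:R.

Definition square_flow (x y : V) : R :=
  square_rate * [&& only_i x, only_j y & adj nb x y]%:R.

Definition flow_out (x : V) : R := \sum_(y <- S) square_flow x y.
Definition flow_in (y : V) : R := \sum_(x <- S) square_flow x y.
Definition total_flow : R := \sum_(x <- S) flow_out x.

Definition src_rest (x : V) : R := src x - stay x - flow_out x.
Definition dst_rest (y : V) : R := dst y - stay y - flow_in y.
Definition rest_mass : R := \sum_(x <- S) src_rest x.

Definition core_plan (x y : V) : R :=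
  stay x * (x == y)%:R + square_flow x y + src_rest x * dst_rest y / rest_mass.

Definition lazy_plan (x y : V) : R := (1 - inv_dmin) / 2 * dirac_plan x y + core_plan x y / 2.

Lemma stay_ge0 x : 0 <= stay x.
Proof.
have := ltW inv_di_gt0; have := ltW inv_dj_gt0; have := inv_dmax_ge0.
by rewrite /stay => ? ? ?; rewrite !addr_ge0 ?mulr_ge0.
Qed.

Lemma stay_le_src x : stay x <= src x.
Proof.
rewrite /stay /src /common.
have [->|xi] := eqVneq x i.
  by rewrite (negbTE (nb_irr i)) (negbTE ij_neq) /= !mulr0 !mulr1 !addr0 inv_dj_le_dmin.
have [->|xj] := eqVneq x j.
  by rewrite j_in_nb_i (negbTE (nb_irr j)) /= !mulr0 !mulr1 !addr0 add0r.
rewrite !mulr0 !add0r; case: (x \in nb i); case: (x \in nb j) => /=;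
  by rewrite ?mulr0 ?mulr1 ?inv_dmax_le_i ?(ltW inv_di_gt0).
Qed.

Lemma stay_le_dst y : stay y <= dst y.
Proof.
rewrite /stay /dst /common.
have [->|yi] := eqVneq y i.
  by rewrite i_in_nb_j (negbTE (nb_irr i)) (negbTE ij_neq) /= !mulr0 !mulr1 !addr0 add0r.
have [->|yj] := eqVneq y j.
  by rewrite j_in_nb_i (negbTE (nb_irr j)) /= !mulr0 !mulr1 !addr0 add0r inv_di_le_dmin.
rewrite !mulr0 !add0r; case: (y \in nb i); case: (y \in nb j) => /=;
  by rewrite ?mulr0 ?mulr1 ?inv_dmax_le_j ?(ltW inv_dj_gt0).
Qed.

Lemma src_only_i x : only_i x -> src x = inv_di /\ stay x = 0.
Proof.
rewrite /only_i => /andP[/andP[xi xj] xnj].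
have xni : (x == i) = false by apply: contraTF xi => /eqP ->; exact: nb_irr.
rewrite /src /stay /common xni xi (negbTE xnj) (negbTE xj) /=.
by split; rewrite ?mulr0 ?mulr1 ?add0r ?addr0.
Qed.

Lemma dst_only_j y : only_j y -> dst y = inv_dj /\ stay y = 0.
Proof.
rewrite /only_j => /andP[/andP[yj yi] yni].
have ynj : (y == j) = false by apply: contraTF yj => /eqP ->; exact: nb_irr.
rewrite /dst /stay /common ynj yj (negbTE yni) (negbTE yi) /=.
by split; rewrite ?mulr0 ?mulr1 ?add0r ?addr0.
Qed.

Lemma square_rate_ge0 : 0 <= square_rate.
Proof. by rewrite divr_ge0 ?inv_dmax_ge0. Qed.

Lemma square_flow_ge0 x y : 0 <= square_flow x y.
Proof. by rewrite mulr_ge0 ?square_rate_ge0. Qed.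

Lemma flow_out_ge0 x : 0 <= flow_out x.
Proof. by rewrite sumr_ge0 // => y _; exact: square_flow_ge0. Qed.

Lemma flow_in_ge0 y : 0 <= flow_in y.
Proof. by rewrite sumr_ge0 // => x _; exact: square_flow_ge0. Qed.

Lemma flow_out_only_i x : only_i x ->
  flow_out x = square_rate * (size (sq_witnesses nb i j x))%:R.
Proof.
move=> xA; rewrite /flow_out /square_flow -mulr_sumr sum_nat_count; congr (_ * _%:R).
rewrite /sq_witnesses size_filter; apply: count_uniq_eq; rewrite ?supp2_uniq ?nb_uniq //.
move=> y; rewrite xA /= /only_j /adj; case: (boolP (y \in nb j)) => yj /=; last by rewrite !andbF.
rewrite supp2_nb_j //=.
by case: (y \in nb x); case: (y \in nb i); case: (y == i).
Qed.

Lemma flow_in_only_j y : only_j y ->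
  flow_in y = square_rate * (size (sq_witnesses nb j i y))%:R.
Proof.
move=> yB; rewrite /flow_in /square_flow -mulr_sumr sum_nat_count; congr (_ * _%:R).
rewrite /sq_witnesses size_filter; apply: count_uniq_eq; rewrite ?supp2_uniq ?nb_uniq //.
move=> x; rewrite yB /= /adj (nb_sym x y) /only_i.
case: (boolP (x \in nb i)) => xi /=; last by rewrite !andbF.
rewrite supp2_nb_i //=.
by case: (x \in nb y); case: (x \in nb j); case: (x == j).
Qed.

Lemma flow_out_eq0 x : ~~ only_i x -> flow_out x = 0.
Proof. by move=> xA; rewrite /flow_out big1 // => y _; rewrite /square_flow (negbTE xA) mulr0. Qed.

Lemma flow_in_eq0 y : ~~ only_j y -> flow_in y = 0.
Proof.
by move=> yB; rewrite /flow_in big1 // => x _; rewrite /square_flow (negbTE yB) andbF mulr0.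
Qed.

Lemma gamma_maxC u v : gamma_max nb u v = gamma_max nb v u.
Proof. exact: maxnC. Qed.

Lemma size_sq_witnesses_le u v k : k \in nb u -> k \notin nb v -> k != v ->
  (size (sq_witnesses nb u v k) <= gamma_max nb u v)%N.
Proof.
move=> ku kv kv'; have [->//|wit] := eqVneq (sq_witnesses nb u v k) [::].
have k_sq : k \in sharp_sq nb u v by rewrite mem_filter ku kv kv' wit.
exact: leq_trans (leq_bigmax_seq k k_sq isT) (leq_maxl _ _).
Qed.

Lemma square_rate_mulr_le n : (n <= gamma_max nb i j)%N ->
  square_rate * n%:R <= inv_dmax.
Proof.
rewrite /square_rate; case: (gamma_max nb i j) => [|g].
  by rewrite leqn0 => /eqP ->; rewrite mulr0 inv_dmax_ge0.
by move=> n_le; rewrite -mulrA ler_piMr ?inv_dmax_ge0 // mulrC ler_pdivrMr ?ltr0n // mul1r ler_nat.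
Qed.

Lemma flow_out_le x : flow_out x <= src x - stay x.
Proof.
have [xA|xA] := boolP (only_i x); last by rewrite flow_out_eq0 // subr_ge0 stay_le_src.
have [-> ->] := src_only_i xA; rewrite subr0 flow_out_only_i //.
apply: le_trans (square_rate_mulr_le _) inv_dmax_le_i.
by move: xA => /andP[/andP[? ?] ?]; exact: size_sq_witnesses_le.
Qed.

Lemma flow_in_le y : flow_in y <= dst y - stay y.
Proof.
have [yB|yB] := boolP (only_j y); last by rewrite flow_in_eq0 // subr_ge0 stay_le_dst.
have [-> ->] := dst_only_j yB; rewrite subr0 flow_in_only_j //.
apply: le_trans (square_rate_mulr_le _) inv_dmax_le_j.
by rewrite gamma_maxC; move: yB => /andP[/andP[? ?] ?]; exact: size_sq_witnesses_le.
Qed.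

Lemma src_rest_ge0 x : 0 <= src_rest x. Proof. by rewrite subr_ge0 flow_out_le. Qed.
Lemma dst_rest_ge0 y : 0 <= dst_rest y. Proof. by rewrite subr_ge0 flow_in_le. Qed.

Lemma rest_mass_ge0 : 0 <= rest_mass.
Proof. by rewrite sumr_ge0 // => x _; exact: src_rest_ge0. Qed.

Lemma src_rest_eq0 x : ~~ ((x == i) || (x \in nb i)) -> src_rest x = 0.
Proof.
rewrite negb_or => /andP[xi xni]; have xj : (x == j) = false by apply: contraNF xni => /eqP ->.
have xA : ~~ only_i x by rewrite /only_i (negbTE xni).
rewrite /src_rest flow_out_eq0 // /src /stay /common (negbTE xi) xj (negbTE xni) /=.
by rewrite !mulr0 !addr0 !subr0.
Qed.

Lemma dst_rest_eq0 y : ~~ ((y == j) || (y \in nb j)) -> dst_rest y = 0.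
Proof.
rewrite negb_or => /andP[yj ynj].
have yi : (y == i) = false by apply: contraNF ynj => /eqP ->; exact: i_in_nb_j.
have yB : ~~ only_j y by rewrite /only_j (negbTE ynj).
rewrite /dst_rest flow_in_eq0 // /dst /stay /common (negbTE yj) yi (negbTE ynj) andbF /=.
by rewrite !mulr0 !addr0 !subr0.
Qed.

Lemma notin_supp2 x : x \notin S -> [&& x != i, x \notin nb i, x != j & x \notin nb j].
Proof.
move=> xS; apply/and4P; split; apply: contraNN xS.
- by move=> /eqP ->; exact: supp2_i.
- exact: supp2_nb_i.
- by move=> /eqP ->; exact: supp2_j.
- exact: supp2_nb_j.
Qed.

Lemma sum_mem_nb v : {subset nb v <= S} -> \sum_(x <- S) (x \in nb v)%:R = (deg nb v)%:R :> R.
Proof.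
move=> vS; rewrite sum_nat_count /deg -(count_predT (nb v)); congr (_%:R).
apply: count_uniq_eq; rewrite ?supp2_uniq ?nb_uniq // => y.
by rewrite andbT; case yv: (y \in nb v); rewrite ?andbF ?andbT ?vS.
Qed.

Local Notation ntri := ((size (sharp_tri nb i j))%:R : R).

Lemma sum_common : \sum_(x <- S) (common x)%:R = ntri.
Proof.
rewrite sum_nat_count /sharp_tri size_filter; congr (_%:R).
apply: count_uniq_eq; rewrite ?supp2_uniq ?nb_uniq // => y.
by rewrite /common; case yi: (y \in nb i); rewrite ?andbF ?andbT ?supp2_nb_i.
Qed.

Lemma sum_src : \sum_(x <- S) src x = inv_dmin + 1.
Proof.
rewrite big_split /= -!mulr_sumr sum_indicator1_seq ?supp2_uniq ?supp2_i //.
by rewrite sum_mem_nb ?mulr1 ?mulr_inv_di //; exact: supp2_nb_i.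
Qed.

Lemma sum_dst : \sum_(y <- S) dst y = inv_dmin + 1.
Proof.
rewrite big_split /= -!mulr_sumr sum_indicator1_seq ?supp2_uniq ?supp2_j //.
by rewrite sum_mem_nb ?mulr1 ?mulr_inv_dj //; exact: supp2_nb_j.
Qed.

Lemma sum_stay : \sum_(x <- S) stay x = inv_dj + inv_di + inv_dmax * ntri.
Proof.
rewrite !big_split /= -!mulr_sumr sum_common.
by rewrite !sum_indicator1_seq ?supp2_uniq ?supp2_i ?supp2_j // !mulr1.
Qed.

Lemma sum_flow_in : \sum_(y <- S) flow_in y = total_flow.
Proof. exact: exchange_big. Qed.

Lemma rest_mass_eq :
  rest_mass = inv_dmin + 1 - (inv_dj + inv_di + inv_dmax * ntri) - total_flow.
Proof. by rewrite /rest_mass !sumrB sum_src sum_stay. Qed.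

Lemma sum_dst_rest : \sum_(y <- S) dst_rest y = rest_mass.
Proof. by rewrite rest_mass_eq !sumrB sum_dst sum_stay sum_flow_in. Qed.

Lemma core_plan_row x : x \in S -> \sum_(y <- S) core_plan x y = src x.
Proof.
move=> xS; rewrite !big_split /= -/(flow_out x).
rewrite (eq_bigr (fun y => (y == x)%:R * stay x)); last by move=> y _; rewrite mulrC eq_sym.
rewrite sum_indicator_seq ?supp2_uniq // sum_product_plan_r //; last first.
- by rewrite sum_dst_rest.
- by move=> y _; exact: src_rest_ge0.
by rewrite /src_rest; ring.
Qed.

Lemma core_plan_col y : y \in S -> \sum_(x <- S) core_plan x y = dst y.
Proof.
move=> yS; rewrite !big_split /= -/(flow_in y).
rewrite (eq_bigr (fun x => (x == y)%:R * stay x)); last by move=> x _; rewrite mulrC.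
rewrite sum_indicator_seq ?supp2_uniq // sum_product_plan_l //; last first.
- by rewrite sum_dst_rest.
- by move=> x _; exact: dst_rest_ge0.
by rewrite /dst_rest; ring.
Qed.

Lemma core_plan_ge0 x y : 0 <= core_plan x y.
Proof.
by rewrite /core_plan !addr_ge0 ?square_flow_ge0 ?mulr_ge0 ?stay_ge0 ?src_rest_ge0
  ?dst_rest_ge0 ?invr_ge0 ?rest_mass_ge0.
Qed.

Lemma core_plan_eq0 x y : (x \notin S) || (y \notin S) -> core_plan x y = 0.
Proof.
case/orP=> [/notin_supp2|/notin_supp2] /and4P[vi v_nbi vj v_nbj].
  rewrite /core_plan src_rest_eq0 ?negb_or ?vi ?v_nbi //.
  rewrite /square_flow /only_i (negbTE v_nbi) /= !mulr0 !mul0r.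
  rewrite (_ : stay x = 0) ?mul0r ?addr0 // /stay /common (negbTE vi) (negbTE vj) (negbTE v_nbi) /=.
  by rewrite !mulr0 !addr0.
rewrite /core_plan dst_rest_eq0 ?negb_or ?vj ?v_nbj //.
rewrite /square_flow /only_j (negbTE v_nbj) andbF /= !mulr0 !mul0r addr0.
case: eqP => [->|_]; rewrite ?mulr0 ?addr0 // mulr1.
by rewrite /stay /common (negbTE vi) (negbTE vj) (negbTE v_nbj) andbF /= !mulr0 !addr0.
Qed.

Lemma lazy_plan_coupling : coupling nb (1 / 2) i j lazy_plan.
Proof.
have dmin_le1 : 0 <= 1 - inv_dmin by rewrite subr_ge0 inv_dmin_le1.
split; [|split; [|split]].
- move=> x y; rewrite /lazy_plan addr_ge0 ?divr_ge0 ?core_plan_ge0 //.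
  by rewrite mulr_ge0 ?divr_ge0 // /dirac_plan mulr_ge0.
- move=> x y xyS; rewrite /lazy_plan core_plan_eq0 // mul0r addr0 /dirac_plan.
  case/orP: xyS => /notin_supp2 /and4P[ni _ nj _].
    by rewrite (negbTE ni) mul0r mulr0.
  by rewrite (negbTE nj) !mulr0.
- move=> x xS; rewrite big_split /= -mulr_sumr -mulr_suml core_plan_row //.
  rewrite /dirac_plan -mulr_sumr sum_indicator1_seq ?supp2_uniq ?supp2_j // /src /mu /inv_di.
  by case: (x == i); case: (x \in nb i); rewrite /=; lra.
- move=> y yS; rewrite big_split /= -mulr_sumr /dirac_plan -!mulr_suml core_plan_col //.
  rewrite sum_indicator1_seq ?supp2_uniq ?supp2_i // /dst /mu /inv_dj.
  by case: (y == j); case: (y \in nb j); rewrite /=; lra.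
Qed.

Lemma dist_rest_le x y : (x == i) || (x \in nb i) -> (y == j) || (y \in nb j) ->
  dist R nb x y <= 2 + (only_i x && only_j y)%:R.
Proof.
move=> xi yj.
have x_i : walk_le nb 1 x i by apply: walk_le1; rewrite /adj (nb_sym x i).
have j_y : walk_le nb 1 j y by apply: walk_le1; rewrite /adj eq_sym.
have [x_j|xj] := boolP ((x == j) || adj nb x j).
  apply: le_trans (dist_le_walk_le R (walk_le_cat (walk_le1 x_j) j_y)) _.
  by rewrite lerDl.
have [i_y|iy] := boolP ((i == y) || adj nb i y).
  apply: le_trans (dist_le_walk_le R (walk_le_cat x_i (walk_le1 i_y))) _.
  by rewrite lerDl.
have xA : only_i x.
  move: xj xi; rewrite /only_i /adj negb_or (nb_sym x j) => /andP[xj xnj].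
  by case/orP => [/eqP xi|->]; [move: xnj; rewrite xi i_in_nb_j | rewrite xj xnj].
have yB : only_j y.
  move: iy yj; rewrite /only_j /adj negb_or eq_sym => /andP[yi ynj].
  by case/orP => [/eqP yj|->]; [move: ynj; rewrite yj j_in_nb_i | rewrite ynj yi].
have i_j : walk_le nb 1 i j by apply: walk_le1; rewrite ij_adj orbT.
rewrite xA yB -natrD; exact: dist_le_walk_le (walk_le_cat (walk_le_cat x_i i_j) j_y).
Qed.

Lemma product_cost_le x y :
  src_rest x * dst_rest y / rest_mass * dist R nb x y <=
  src_rest x * dst_rest y / rest_mass * (2 + (only_i x && only_j y)%:R).
Proof.
have [xi|/src_rest_eq0 ->] := boolP ((x == i) || (x \in nb i)); last by rewrite !mul0r.
have [yj|/dst_rest_eq0 ->] := boolP ((y == j) || (y \in nb j)); last by rewrite mulr0 !mul0r.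
by rewrite ler_wpM2l ?dist_rest_le // divr_ge0 ?mulr_ge0 ?src_rest_ge0 ?dst_rest_ge0 ?rest_mass_ge0.
Qed.

Definition rest_only_i : R := \sum_(x <- S) (only_i x)%:R * src_rest x.
Definition rest_only_j : R := \sum_(y <- S) (only_j y)%:R * dst_rest y.

(* Mass kept in place costs nothing, the square flow runs along edges, and the
   product part moves mass between [{i} ∪ nb i] and [{j} ∪ nb j]. *)
Lemma cost_core_plan :
  cost core_plan <= total_flow + 2 * rest_mass + rest_only_i * rest_only_j / rest_mass.
Proof.
have pointwise x y : core_plan x y * dist R nb x y <= square_flow x y +
    2 * (src_rest x * dst_rest y / rest_mass) +
    (only_i x)%:R * src_rest x * ((only_j y)%:R * dst_rest y) / rest_mass.
  have stay_cost : stay x * (x == y)%:R * dist R nb x y = 0.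
    by have [<-|_] := eqVneq x y; rewrite ?dist_refl ?mulr0 ?mul0r.
  have flow_cost : square_flow x y * dist R nb x y <= square_flow x y.
    rewrite /square_flow; case: and3P => [[_ _ xy]|_]; last by rewrite !mulr0 mul0r.
    rewrite mulr1 ler_piMr ?square_rate_ge0 //.
    by apply: (@dist_le_walk_le _ _ _ 1); apply: walk_le1; rewrite xy orbT.
  have rest_cost : src_rest x * dst_rest y / rest_mass * dist R nb x y <=
      2 * (src_rest x * dst_rest y / rest_mass) +
      (only_i x)%:R * src_rest x * ((only_j y)%:R * dst_rest y) / rest_mass.
    rewrite (_ : _ + _ = src_rest x * dst_rest y / rest_mass * (2 + (only_i x && only_j y)%:R)).
      exact: product_cost_le.
    by case: (only_i x); case: (only_j y); rewrite /=; ring.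
  by rewrite /core_plan mulrDl mulrDl stay_cost add0r -addrA lerD.
apply: le_trans (ler_sum _ (fun x _ => ler_sum _ (fun y _ => pointwise x y))) _.
rewrite (eq_bigr (fun x => flow_out x +
    \sum_(y <- S) 2 * src_rest x * dst_rest y / rest_mass +
    \sum_(y <- S) (only_i x)%:R * src_rest x * ((only_j y)%:R * dst_rest y) / rest_mass));
  last by move=> x _; rewrite -!big_split /=; apply: eq_bigr => y _; rewrite !(mulrA 2).
rewrite !big_split /= -/total_flow !sum_outer_mulr -mulr_sumr -/rest_mass sum_dst_rest.
rewrite -/rest_only_i -/rest_only_j lerD2r lerD2l.
by have [->|Zn] := eqVneq rest_mass 0; rewrite ?mulr0 // mulfK.
Qed.

Lemma rest_only_i_ge0 : 0 <= rest_only_i.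
Proof. by rewrite sumr_ge0 // => x _; rewrite mulr_ge0 ?src_rest_ge0. Qed.
Lemma rest_only_j_ge0 : 0 <= rest_only_j.
Proof. by rewrite sumr_ge0 // => y _; rewrite mulr_ge0 ?dst_rest_ge0. Qed.

Lemma rest_only_i_le : rest_only_i <= rest_mass.
Proof.
by apply: ler_sum => x _; case: (only_i x); rewrite /= ?mul1r ?mul0r ?src_rest_ge0.
Qed.

Lemma rest_only_j_le : rest_only_j <= rest_mass.
Proof.
rewrite -sum_dst_rest; apply: ler_sum => y _.
by case: (only_j y); rewrite /= ?mul1r ?mul0r ?dst_rest_ge0.
Qed.

Lemma rest_only_i_eq : rest_only_i = 1 - inv_di - inv_di * ntri - total_flow.
Proof.
have nb_i_split x : (x \in nb i)%:R = (x == j)%:R + (common x)%:R + (only_i x)%:R :> R.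
  rewrite /common /only_i; have [->|xj] := eqVneq x j.
    by rewrite j_in_nb_i (negbTE (nb_irr j)) /= !addr0.
  by case: (x \in nb i); case: (x \in nb j); rewrite /= ?add0r ?addr0.
have only_i_rest x : (only_i x)%:R * src_rest x = inv_di * (only_i x)%:R - flow_out x.
  have [xA|xA] := boolP (only_i x); last by rewrite flow_out_eq0 // mul0r mulr0 subr0.
  by have [src_x stay_x] := src_only_i xA; rewrite /src_rest src_x stay_x /=; ring.
have count_only_i : \sum_(x <- S) (only_i x)%:R = (deg nb i)%:R - 1 - ntri :> R.
  rewrite -(sum_mem_nb (v := i)); last exact: supp2_nb_i.
  rewrite (eq_bigr _ (fun x _ => nb_i_split x)) !big_split /= sum_common.
  by rewrite sum_indicator1_seq ?supp2_uniq ?supp2_j //; ring.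
rewrite /rest_only_i (eq_bigr _ (fun x _ => only_i_rest x)) sumrB -mulr_sumr count_only_i.
by rewrite !mulrBr mulr_inv_di mulr1.
Qed.

Lemma rest_only_j_eq : rest_only_j = 1 - inv_dj - inv_dj * ntri - total_flow.
Proof.
have nb_j_split y : (y \in nb j)%:R = (y == i)%:R + (common y)%:R + (only_j y)%:R :> R.
  rewrite /common /only_j; have [->|yi] := eqVneq y i.
    by rewrite i_in_nb_j (negbTE (nb_irr i)) /= !addr0.
  by case: (y \in nb i); case: (y \in nb j); rewrite /= ?add0r ?addr0.
have only_j_rest y : (only_j y)%:R * dst_rest y = inv_dj * (only_j y)%:R - flow_in y.
  have [yB|yB] := boolP (only_j y); last by rewrite flow_in_eq0 // mul0r mulr0 subr0.
  by have [dst_y stay_y] := dst_only_j yB; rewrite /dst_rest dst_y stay_y /=; ring.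
have count_only_j : \sum_(y <- S) (only_j y)%:R = (deg nb j)%:R - 1 - ntri :> R.
  rewrite -(sum_mem_nb (v := j)); last exact: supp2_nb_j.
  rewrite (eq_bigr _ (fun y _ => nb_j_split y)) !big_split /= sum_common.
  by rewrite sum_indicator1_seq ?supp2_uniq ?supp2_i //; ring.
rewrite /rest_only_j (eq_bigr _ (fun y _ => only_j_rest y)) sumrB -mulr_sumr count_only_j.
by rewrite sum_flow_in !mulrBr mulr_inv_dj mulr1.
Qed.

Local Notation nsq_i := ((size (sharp_sq nb i j))%:R : R).
Local Notation nsq_j := ((size (sharp_sq nb j i))%:R : R).

Lemma total_flow_ge_i : square_rate * nsq_i <= total_flow.
Proof.
have rate0 := square_rate_ge0.
have pointwise x : square_rate * (x \in sharp_sq nb i j)%:R <= flow_out x.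
  have [|_] := boolP (x \in sharp_sq nb i j); last by rewrite mulr0 flow_out_ge0.
  rewrite mem_filter => /andP[/andP[/andP[xj xj'] wit] xi].
  rewrite flow_out_only_i; last by rewrite /only_i xi xj xj'.
  by apply: ler_wpM2l => //; rewrite ler_nat lt0n size_eq0.
apply: le_trans (ler_sum _ (fun x _ => pointwise x)); rewrite -mulr_sumr sum_nat_count.
apply: ler_wpM2l => //; rewrite ler_nat -(count_predT (sharp_sq nb i j)).
apply/eq_leq/count_uniq_eq; rewrite ?supp2_uniq ?filter_uniq ?nb_uniq // => y.
rewrite andbT; case y_sq: (y \in sharp_sq nb i j); rewrite ?andbF //= andbT.
by apply/esym/supp2_nb_i; move: y_sq; rewrite mem_filter => /andP[].
Qed.

Lemma total_flow_ge_j : square_rate * nsq_j <= total_flow.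
Proof.
have rate0 := square_rate_ge0.
have pointwise y : square_rate * (y \in sharp_sq nb j i)%:R <= flow_in y.
  have [|_] := boolP (y \in sharp_sq nb j i); last by rewrite mulr0 flow_in_ge0.
  rewrite mem_filter => /andP[/andP[/andP[yi yi'] wit] yj].
  rewrite flow_in_only_j; last by rewrite /only_j yi yj yi'.
  by apply: ler_wpM2l => //; rewrite ler_nat lt0n size_eq0.
rewrite -sum_flow_in; apply: le_trans (ler_sum _ (fun y _ => pointwise y)).
rewrite -mulr_sumr sum_nat_count.
apply: ler_wpM2l => //; rewrite ler_nat -(count_predT (sharp_sq nb j i)).
apply/eq_leq/count_uniq_eq; rewrite ?supp2_uniq ?filter_uniq ?nb_uniq // => y.
rewrite andbT; case y_sq: (y \in sharp_sq nb j i); rewrite ?andbF //= andbT.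
by apply/esym/supp2_nb_j; move: y_sq; rewrite mem_filter => /andP[].
Qed.

Lemma Ric_le_total_flow : Ric R nb i j <=
  -2 + 2 * inv_di + 2 * inv_dj + 2 * (inv_dmax * ntri) + inv_dmin * ntri + 2 * total_flow.
Proof.
have flow_i := total_flow_ge_i; have flow_j := total_flow_ge_j.
have flow0 : 0 <= total_flow by rewrite sumr_ge0 // => x _; exact: flow_out_ge0.
have tri0 : 0 <= ntri by [].
have hmax := inv_dmax_ge0; have hi := inv_di_gt0; have hj := inv_dj_gt0.
have hmin : 0 <= inv_dmin by apply: le_trans (ltW hi) inv_di_le_dmin.
have t1 : 0 <= inv_dmax * ntri by rewrite mulr_ge0.
have t2 : 0 <= inv_dmin * ntri by rewrite mulr_ge0.
rewrite /Ric /=; case: ifP => [deg1|_].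
  have : inv_di = 1 \/ inv_dj = 1.
    move: deg1; rewrite /inv_di /inv_dj; case: leqP => _ /eqP ->; rewrite invr1; by [left|right].
  by case=> ->; lra.
have [-> ->] := inv_maxn_minn_deg; rewrite -/inv_di -/inv_dj.
case: ifP => _; first by rewrite addr0; lra.
have -> : (gamma_max nb i j)%:R^-1 * inv_dmax * (nsq_i + nsq_j) =
    square_rate * nsq_i + square_rate * nsq_j by rewrite /square_rate; ring.
lra.
Qed.

Lemma cost_lazy_plan : cost lazy_plan <= 1 - Ric R nb i j / 2.
Proof.
have -> : cost lazy_plan = (1 - inv_dmin) / 2 * cost dirac_plan + 1 / 2 * cost core_plan.
  rewrite -cost_lincomb /cost; apply: eq_bigr => x _; apply: eq_bigr => y _.
  by rewrite /lazy_plan; ring.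
have core := cost_core_plan; have ric := Ric_le_total_flow.
have rest := rest_mass_eq; have rest_i := rest_only_i_eq; have rest_j := rest_only_j_eq.
have prod_i : rest_only_i * rest_only_j / rest_mass <= rest_only_i.
  by rewrite ler_mul_divl ?rest_only_i_ge0 ?rest_only_j_ge0 ?rest_only_j_le.
have prod_j : rest_only_i * rest_only_j / rest_mass <= rest_only_j.
  by rewrite (mulrC rest_only_i) ler_mul_divl ?rest_only_i_ge0 ?rest_only_j_ge0 ?rest_only_i_le.
have dirac : (1 - inv_dmin) / 2 * cost dirac_plan <= (1 - inv_dmin) / 2.
  by rewrite ler_piMr ?divr_ge0 ?subr_ge0 ?inv_dmin_le1 ?cost_dirac_plan.
(* The product term is charged to [rest_only_j] if [d_j <= d_i], to [rest_only_i] otherwise. *)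
rewrite /inv_dmin /inv_dmax in dirac rest ric *.
case: (lerP inv_di inv_dj) => dij.
  rewrite max_r // min_l // in dirac rest ric *; lra.
rewrite max_l ?min_r ?(ltW dij) // in dirac rest ric *; lra.
Qed.

Lemma Ric_le_ollivier_slope_half : Ric R nb i j <= ollivier_slope (1 / 2).
Proof.
have := W1_le_cost lazy_plan_coupling; have := cost_lazy_plan.
rewrite /ollivier_slope (_ : 1 - 1 / 2 = 1 / 2 :> R); last by field.
by rewrite ler_pdivlMr //; lra.
Qed.

End Edge.

Theorem theorem2 (R : realType) (V : eqType) (nb : V -> seq V)
  (Hsimple : simple_graph nb) (Hconn : connected_graph nb)
  (i j : V) (Hij : adj nb i j) :
  exists kappa : R,
    ((1 - W1 nb x i j) / (1 - x) @[x --> (1 : R)^'-] --> kappa)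
    /\ Ric R nb i j <= kappa.
Proof.
have half_lt1 : (1 / 2 : R) < 1 by lra.
have [kappa [slope_cvg slope_half_le]] := ollivier_slope_cvg_ge Hsimple Hconn Hij half_lt1
  (ex_intro _ _ (lazy_plan_coupling R Hsimple Hij)).
exists kappa; split; first exact: slope_cvg.
exact: le_trans (Ric_le_ollivier_slope_half R Hsimple Hconn Hij) slope_half_le.
Qed.
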